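(* Let $\delta_0=\frac14-\frac{2}{\pi^2}$. For every $\epsilon>0$ there exists a set $A\subseteq\mathbb{N}$ having (natural) density greater than $\delta_0-\epsilon$ such that: $A+A$ contains no squarefree integer; $A+A+A$ contains all positive integers with finitely many exceptions; and the set of positive integers which are not squarefree and are not contained in $A+A$ has upper density at most $\epsilon$.
   Context: $A+A=\{a+b:a,b\in A\}$, $A+A+A=\{a+b+c:a,b,c\in A\}$. *)

From Stdlib Require Import Reals Lra Lia Arith ClassicalEpsilon.
Open Scope R_scope.

Definition squarefree (n : nat) : Prop :=
  (0 < n)%nat /\ forall d : nat, (2 <= d)%nat -> ~ Nat.divide (d * d) n.

Definition sumset2 (A : nat -> Prop) (m : nat) : Prop :=
  exists a b, A a /\ A b /\ m = (a + b)%nat.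
Definition sumset3 (A : nat -> Prop) (m : nat) : Prop :=
  exists a b c, A a /\ A b /\ A c /\ m = (a + b + c)%nat.

Fixpoint cnt (P : nat -> Prop) (n : nat) : nat :=
  match n with
  | O => O
  | S m => (cnt P m + (if excluded_middle_informative (P (S m)) then 1 else 0))%nat
  end.

Definition has_density (P : nat -> Prop) (d : R) : Prop :=
  Un_cv (fun n => INR (cnt P (S n)) / INR (S n)) d.

Definition upper_density_le (P : nat -> Prop) (c : R) : Prop :=
  forall eta : R, 0 < eta -> exists N : nat, forall n : nat, (N <= n)%nat ->
    INR (cnt P (S n)) / INR (S n) <= c + eta.

Definition delta0 : R := 1/4 - 2 / (PI ^ 2).

(* For k >= 2 let L_k = prod_{i=1}^{k} (2i+1)^2 and
     A_k = { n = 2 mod 4 : (2i+1)^2 | n for some 1 <= i <= k }  U  L_k N.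
   - A_k + A_k has no squarefree element: two elements = 2 mod 4 add up to a
     multiple of 4, and otherwise an odd square (2i+1)^2 divides both summands.
   - Every large multiple of 4 is a sum of two elements = 2 mod 4 divisible by
     9 and by 25 respectively (a Chinese remainder computation); adding a
     multiple of L_k with the right residue mod 4 shows that A_k + A_k + A_k
     contains all large integers.  The same facts show that a large
     non-squarefree integer outside A_k + A_k is divisible by d^2 for some
     d > 2k+1, so these have upper density <= sum_{d>2k+1} 1/d^2 <= 1/(2k+1).
   - A_k is 4 L_k-periodic, hence has a density.  The part C_k of the class
     2 mod 4 missed by A_k is small: the dilates (2i+1)^2 C_k, 0 <= i <= k, are
     pairwise disjoint and stay in the class 2 mod 4, whence
     dens(C_k) * sum_{i<=k} 1/(2i+1)^2 <= 1/4, and dens(A_k) -> 1/4 - 2/pi^2.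
   The file first derives sum_{i>=0} 1/(2i+1)^2 = pi^2/8 from Matsuoka's
   elementary proof of the Basel identity, then builds a small counting and
   density library for [cnt], then treats the additive properties of A_k, its
   exceptional set and its density; theorem1 chooses k large at the end. *)

From Coquelicot Require Import Coquelicot.
From Stdlib Require Import Reals Lra Lia Arith ZArith ZifyNat ClassicalEpsilon Classical.
Open Scope R_scope.

Lemma is_RInt_of_derive (F f : R -> R) a b :
  (forall x, is_derive F x (f x)) -> (forall x, ex_derive f x) ->
  is_RInt f a b (F b - F a).
Proof.
intros HF Hf. change (F b - F a) with (minus (F b) (F a)).
apply (@is_RInt_derive R_CompleteNormedModule); intros x _;
  [apply HF | apply (@ex_derive_continuous R_AbsRing R_NormedModule), Hf].
Qed.

Lemma ex_RInt_of_derivable (f : R -> R) a b :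
  (forall x, ex_derive f x) -> ex_RInt f a b.
Proof.
intros Hf. apply (@ex_RInt_continuous R_CompleteNormedModule); intros x _.
apply (@ex_derive_continuous R_AbsRing R_NormedModule), Hf.
Qed.

Ltac solve_ex_RInt := apply ex_RInt_of_derivable; intros; auto_derive; auto.

Lemma RInt_lin_comb3 (f g h : R -> R) a b c1 c2 c3 v :
  ex_RInt f a b -> ex_RInt g a b -> ex_RInt h a b ->
  is_RInt (fun x => c1 * f x + c2 * g x + c3 * h x) a b v ->
  c1 * RInt f a b + c2 * RInt g a b + c3 * RInt h a b = v.
Proof.
intros Hf Hg Hh Hv.
apply (@RInt_correct R_CompleteNormedModule) in Hf, Hg, Hh.
pose proof (is_RInt_plus _ _ _ _ _ _
  (is_RInt_plus _ _ _ _ _ _ (is_RInt_scal _ _ _ c1 _ Hf) (is_RInt_scal _ _ _ c2 _ Hg))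
  (is_RInt_scal _ _ _ c3 _ Hh)) as Hsum.
apply (@is_RInt_unique R_CompleteNormedModule) in Hsum, Hv.
rewrite <- Hv. exact (eq_sym Hsum).
Qed.

Lemma sin_mul_sin x : sin x * sin x = 1 - cos x * cos x.
Proof. pose proof (sin2_cos2 x). unfold Rsqr in H. lra. Qed.

Lemma cos_PI2_pow k : cos (PI/2) ^ (S k) = 0.
Proof. rewrite cos_PI2. simpl. ring. Qed.

Lemma cos_even_pow_nonneg x m : 0 <= cos x ^ (2 * m).
Proof. replace (2 * m)%nat with (m * 2)%nat by lia. rewrite pow_mult. apply pow2_ge_0. Qed.

(* Matsuoka's proof of the Basel identity uses the Wallis-type integrals
     Icos n = int_0^{pi/2} cos^{2n} x dx,   Jcos n = int_0^{pi/2} x^2 cos^{2n} x dx. *)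
Definition Icos n : R := RInt (fun x => cos x ^ (2 * n)) 0 (PI/2).
Definition Jcos n : R := RInt (fun x => x ^ 2 * cos x ^ (2 * n)) 0 (PI/2).

(* Antiderivative behind the recurrence of [Icos] (integration by parts). *)
Lemma derive_Icos_rec (m : nat) x :
  is_derive (fun x => sin x * cos x ^ (2 * m + 1)) x
    (INR (2 * m + 2) * cos x ^ (2 * m + 2) + - INR (2 * m + 1) * cos x ^ (2 * m) + 0 * 0).
Proof.
auto_derive; auto.
replace (m + (m + 0) + 1)%nat with (2 * m + 1)%nat by lia.
replace (Init.Nat.pred (2 * m + 1)) with (2 * m)%nat by lia.
rewrite !pow_add, !plus_INR, !mult_INR. simpl.
pose proof (sin_mul_sin x).
set (p := cos x ^ (m + (m + 0))) in *. set (s := sin x) in *. set (c := cos x) in *.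
replace (s * (1 * - s * (((1 + 1) * INR m + 1) * p)))
  with (- (s * s) * (((1 + 1) * INR m + 1) * p)) by ring.
rewrite H. ring.
Qed.

(* Antiderivative behind the recurrence of [Jcos] (two integrations by parts). *)
Lemma derive_Jcos_rec (m : nat) x :
  is_derive (fun x => x * cos x ^ (2 * m + 2)
                      + INR (m + 1) * (x ^ 2 * (sin x * cos x ^ (2 * m + 1)))) x
    (1 * cos x ^ (2 * m + 2) + (2 * INR (m + 1) ^ 2) * (x ^ 2 * cos x ^ (2 * m + 2))
     + (- (INR (m + 1) * INR (2 * m + 1))) * (x ^ 2 * cos x ^ (2 * m))).
Proof.
auto_derive; auto.
replace (m + (m + 0) + 1)%nat with (2 * m + 1)%nat by lia.
replace (m + (m + 0) + 2)%nat with (2 * m + 2)%nat by lia.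
replace (Init.Nat.pred (2 * m + 1)) with (2 * m)%nat by lia.
replace (Init.Nat.pred (2 * m + 2)) with (2 * m + 1)%nat by lia.
rewrite !pow_add, !plus_INR, !mult_INR. simpl.
pose proof (sin_mul_sin x).
set (p := cos x ^ (m + (m + 0))) in *. set (s := sin x) in *. set (c := cos x) in *.
replace (s * (1 * - s * (((1 + 1) * INR m + 1) * p)))
  with (- (s * s) * (((1 + 1) * INR m + 1) * p)) by ring.
rewrite H. ring.
Qed.

Lemma Icos_rec m : INR (2 * m + 2) * Icos (m + 1) = INR (2 * m + 1) * Icos m.
Proof.
assert (H := RInt_lin_comb3 (fun x => cos x ^ (2 * m + 2)) (fun x => cos x ^ (2 * m))
  (fun _ => 0) 0 (PI/2) (INR (2 * m + 2)) (- INR (2 * m + 1)) 0 _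
  ltac:(solve_ex_RInt) ltac:(solve_ex_RInt) ltac:(solve_ex_RInt)
  (is_RInt_of_derive _ _ 0 (PI/2) (derive_Icos_rec m) ltac:(intros; auto_derive; auto))).
unfold Icos. replace (2 * (m + 1))%nat with (2 * m + 2)%nat by lia.
replace (2 * m + 1)%nat with (S (2 * m)) in H |- * by lia.
rewrite cos_PI2_pow, sin_0 in H. lra.
Qed.

Lemma Jcos_rec m :
  Icos (m + 1) + 2 * INR (m + 1) ^ 2 * Jcos (m + 1) = INR (m + 1) * INR (2 * m + 1) * Jcos m.
Proof.
assert (H := RInt_lin_comb3 (fun x => cos x ^ (2 * m + 2)) (fun x => x ^ 2 * cos x ^ (2 * m + 2))
  (fun x => x ^ 2 * cos x ^ (2 * m)) 0 (PI/2) 1 (2 * INR (m + 1) ^ 2)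
  (- (INR (m + 1) * INR (2 * m + 1))) _
  ltac:(solve_ex_RInt) ltac:(solve_ex_RInt) ltac:(solve_ex_RInt)
  (is_RInt_of_derive _ _ 0 (PI/2) (derive_Jcos_rec m) ltac:(intros; auto_derive; auto))).
unfold Icos, Jcos. replace (2 * (m + 1))%nat with (2 * m + 2)%nat by lia.
replace (2 * m + 1)%nat with (S (2 * m)) in H by lia.
replace (2 * m + 2)%nat with (S (2 * m + 1)) in H |- * by lia.
rewrite !cos_PI2_pow, sin_0 in H. replace (S (2 * m)) with (2 * m + 1)%nat in H by lia. lra.
Qed.

Lemma Icos_0 : Icos 0 = PI/2.
Proof.
unfold Icos. simpl.
assert (H := is_RInt_of_derive (fun x => x) (fun _ => 1) 0 (PI/2)
  ltac:(intros; auto_derive; auto) ltac:(intros; auto_derive; auto)).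
apply (@is_RInt_unique R_CompleteNormedModule) in H. rewrite H. ring.
Qed.

Lemma Jcos_0 : Jcos 0 = (PI/2) ^ 3 / 3.
Proof.
unfold Jcos. simpl.
assert (H := is_RInt_of_derive (fun x => x ^ 3 / 3) (fun x => x ^ 2 * 1) 0 (PI/2)
  ltac:(intros; auto_derive; [auto | simpl; field]) ltac:(intros; auto_derive; auto)).
apply (@is_RInt_unique R_CompleteNormedModule) in H. etransitivity; [exact H |].
change (@eq R ((PI/2) ^ 3 / 3 - 0 ^ 3 / 3) ((PI/2) ^ 3 / 3)). field.
Qed.

Lemma Icos_pos n : 0 < Icos n.
Proof.
induction n as [|n IH].
- rewrite Icos_0. pose proof PI2_RGT_0. lra.
- replace (S n) with (n + 1)%nat by lia.
  pose proof (Icos_rec n) as Hrec.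
  assert (0 < INR (2 * n + 2)) by (apply lt_0_INR; lia).
  assert (0 < INR (2 * n + 1)) by (apply lt_0_INR; lia).
  replace (Icos (n + 1)) with (INR (2 * n + 1) * Icos n / INR (2 * n + 2))
    by (rewrite <- Hrec; field; lra).
  apply Rdiv_lt_0_compat; [apply Rmult_lt_0_compat|]; lra.
Qed.

Lemma Jcos_nonneg n : 0 <= Jcos n.
Proof.
unfold Jcos. apply RInt_ge_0; [pose proof PI2_RGT_0; lra | solve_ex_RInt |].
intros. apply Rmult_le_pos; [apply pow2_ge_0 | apply cos_even_pow_nonneg].
Qed.

(* x cos x <= sin x on [0, pi/2], since (sin x - x cos x)' = x sin x >= 0. *)
Lemma x_cos_le_sin x : 0 <= x <= PI/2 -> x * cos x <= sin x.
Proof.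
intros Hx.
assert (H := is_RInt_of_derive (fun t => sin t - t * cos t) (fun t => t * sin t) 0 x
  ltac:(intros; auto_derive; [auto | ring]) ltac:(intros; auto_derive; auto)).
assert (0 <= RInt (fun t => t * sin t) 0 x).
{ apply RInt_ge_0; [lra | solve_ex_RInt |]. intros.
  apply Rmult_le_pos; [lra | apply sin_ge_0; pose proof PI2_Rlt_PI; lra]. }
apply (@is_RInt_unique R_CompleteNormedModule) in H. rewrite H, sin_0 in *. lra.
Qed.

(* J_{m+1} <= I_m - I_{m+1}, from x^2 cos^2 x <= sin^2 x = 1 - cos^2 x. *)
Lemma Jcos_le_Icos_diff m : Jcos (m + 1) <= Icos m - Icos (m + 1).
Proof.
unfold Jcos, Icos.
rewrite <- (RInt_minus (V := R_CompleteNormedModule)) by solve_ex_RInt.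
apply RInt_le; [pose proof PI2_RGT_0; lra | solve_ex_RInt
               | apply (ex_RInt_minus (V := R_CompleteNormedModule)); solve_ex_RInt |].
intros y Hy. replace (2 * (m + 1))%nat with (2 * m + 2)%nat by lia.
change (minus (cos y ^ (2 * m)) (cos y ^ (2 * m + 2))) with (cos y ^ (2 * m) - cos y ^ (2 * m + 2)).
rewrite pow_add.
pose proof (cos_even_pow_nonneg y m).
assert (0 <= cos y) by (apply cos_ge_0; pose proof PI2_Rlt_PI; lra).
assert (y * cos y <= sin y) by (apply x_cos_le_sin; lra).
assert (0 <= y * cos y) by (apply Rmult_le_pos; lra).
assert (y * cos y * (y * cos y) <= sin y * sin y) by (apply Rmult_le_compat; lra).
rewrite sin_mul_sin in *. nra.
Qed.

(* The ratio r_n = J_n / I_n; the recurrences make it telescope. *)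
Definition ratio_JI n := Jcos n / Icos n.

Lemma ratio_JI_step m : ratio_JI m - ratio_JI (m + 1) = 1 / (2 * INR (m + 1) ^ 2).
Proof.
pose proof (Icos_rec m) as HA. pose proof (Jcos_rec m) as HB.
pose proof (Icos_pos m). pose proof (Icos_pos (m + 1)).
unfold ratio_JI.
assert (E1 : INR (2 * m + 2) = 2 * INR (m + 1)) by (rewrite !plus_INR, !mult_INR; simpl; ring).
assert (E2 : INR (2 * m + 1) = 2 * INR (m + 1) - 1) by (rewrite !plus_INR, !mult_INR; simpl; ring).
rewrite E1, E2 in HA. rewrite E2 in HB.
assert (Hn : 1 <= INR (m + 1)) by (apply (le_INR 1); lia).
set (n := INR (m + 1)) in *.
replace (Icos m) with (2 * n * Icos (m + 1) / (2 * n - 1)) by (rewrite HA; field; lra).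
replace (Jcos m) with ((Icos (m + 1) + 2 * n ^ 2 * Jcos (m + 1)) / (n * (2 * n - 1)))
  by (rewrite HB; field; lra).
field. repeat split; lra.
Qed.

Lemma ratio_JI_bound m : 0 <= ratio_JI (m + 1) <= 1 / INR (2 * m + 1).
Proof.
pose proof (Icos_rec m) as HA. pose proof (Jcos_le_Icos_diff m).
pose proof (Icos_pos m). pose proof (Icos_pos (m + 1)). pose proof (Jcos_nonneg (m + 1)).
unfold ratio_JI.
assert (0 < INR (2 * m + 1)) by (apply lt_0_INR; lia).
assert (E : INR (2 * m + 2) = INR (2 * m + 1) + 1) by (rewrite !plus_INR, !mult_INR; simpl; ring).
rewrite E in HA.
split; [apply Rdiv_le_0_compat; lra |].
apply (Rmult_le_reg_r (Icos (m + 1))); [lra |].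
replace (Jcos (m + 1) / Icos (m + 1) * Icos (m + 1)) with (Jcos (m + 1)) by (field; lra).
apply (Rmult_le_reg_l (INR (2 * m + 1))); [lra |].
replace (INR (2 * m + 1) * (1 / INR (2 * m + 1) * Icos (m + 1))) with (Icos (m + 1))
  by (field; lra).
nra.
Qed.

Fixpoint sum_inv_sq (N : nat) : R :=
  match N with 0 => 0 | S k => sum_inv_sq k + 1 / INR (S k) ^ 2 end.

Lemma sum_inv_sq_eq N : sum_inv_sq N = PI ^ 2 / 6 - 2 * ratio_JI N.
Proof.
induction N as [|N IH].
- simpl. unfold ratio_JI. rewrite Icos_0, Jcos_0. field. pose proof PI2_RGT_0; lra.
- change (sum_inv_sq (S N)) with (sum_inv_sq N + 1 / INR (S N) ^ 2).
  pose proof (ratio_JI_step N) as Hstep. replace (S N) with (N + 1)%nat by lia.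
  rewrite IH. replace (ratio_JI N) with (ratio_JI (N + 1) + 1 / (2 * INR (N + 1) ^ 2)) by lra.
  field. apply not_0_INR. lia.
Qed.

Fixpoint sum_inv_odd_sq (M : nat) : R :=
  match M with 0 => 0 | S i => sum_inv_odd_sq i + 1 / INR (2 * i + 1) ^ 2 end.

Lemma sum_inv_sq_split M : sum_inv_sq (2 * M) = sum_inv_odd_sq M + sum_inv_sq M / 4.
Proof.
induction M as [|M IH]; [simpl; lra |].
replace (2 * S M)%nat with (S (S (2 * M))) by lia.
change (sum_inv_sq (S (S (2 * M))))
  with (sum_inv_sq (2 * M) + 1 / INR (S (2 * M)) ^ 2 + 1 / INR (S (S (2 * M))) ^ 2).
change (sum_inv_odd_sq (S M)) with (sum_inv_odd_sq M + 1 / INR (2 * M + 1) ^ 2).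
change (sum_inv_sq (S M)) with (sum_inv_sq M + 1 / INR (S M) ^ 2).
rewrite IH.
replace (S (2 * M)) with (2 * M + 1)%nat by lia. replace (S (2 * M + 1)) with (2 * S M)%nat by lia.
rewrite (mult_INR 2). simpl (INR 2). field. split; apply not_0_INR; lia.
Qed.

Lemma eventually_gt_INR (x : R) : exists N : nat, forall n, (N <= n)%nat -> x < INR n.
Proof.
destruct (archimed (Rmax x 0)) as [H _].
assert (0 <= up (Rmax x 0))%Z by (apply le_IZR; pose proof (Rmax_r x 0); lra).
exists (Z.to_nat (up (Rmax x 0))). intros n Hn.
assert (INR (Z.to_nat (up (Rmax x 0))) = IZR (up (Rmax x 0)))
  by (rewrite INR_IZR_INZ, Z2Nat.id; [reflexivity | lia]).
apply le_INR in Hn. pose proof (Rmax_l x 0). lra.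
Qed.

Lemma eventually_div_lt (c eps : R) : 0 < eps ->
  exists N : nat, forall n, (N <= n)%nat -> c / INR n < eps.
Proof.
intros He. destruct (eventually_gt_INR (Rmax (c / eps) 0)) as [N HN].
exists N. intros n Hn. specialize (HN n Hn).
pose proof (Rmax_l (c / eps) 0). pose proof (Rmax_r (c / eps) 0).
apply (Rmult_lt_reg_r (INR n)); [lra |].
replace (c / INR n * INR n) with c by (field; lra).
apply (Rmult_lt_reg_l (/ eps)); [apply Rinv_0_lt_compat; lra |].
replace (/ eps * (eps * INR n)) with (INR n) by (field; lra).
replace (/ eps * c) with (c / eps) by (unfold Rdiv; ring). lra.
Qed.

Lemma sum_inv_odd_sq_lower (eta : R) : 0 < eta ->
  exists M0, forall M, (M0 <= M)%nat -> PI ^ 2 / 8 - eta <= sum_inv_odd_sq M.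
Proof.
intros He. destruct (eventually_div_lt 1 (eta / 2)) as [N HN]; [lra |].
exists (S N). intros [|m] HM; [lia |].
pose proof (sum_inv_sq_split (S m)) as Hsplit. rewrite !sum_inv_sq_eq in Hsplit.
replace (2 * S m)%nat with ((2 * m + 1) + 1)%nat in Hsplit by lia.
replace (S m) with (m + 1)%nat in * by lia.
pose proof (ratio_JI_bound (2 * m + 1)). pose proof (ratio_JI_bound m).
assert (1 / INR (2 * (2 * m + 1) + 1) < eta / 2) by (apply HN; lia).
lra.
Qed.

Section Counting.
Local Open Scope nat_scope.

Lemma cnt_S P n :
  cnt P (S n) = cnt P n + (if excluded_middle_informative (P (S n)) then 1 else 0).
Proof. reflexivity. Qed.

Lemma cnt_le_n P n : cnt P n <= n.
Proof. induction n; simpl; [lia |]. destruct excluded_middle_informative; lia. Qed.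

Lemma cnt_mono (P Q : nat -> Prop) n :
  (forall m, 1 <= m <= n -> P m -> Q m) -> cnt P n <= cnt Q n.
Proof.
induction n as [|n IH]; intros H; simpl; [lia |].
assert (cnt P n <= cnt Q n) by (apply IH; intros; apply H; auto; lia).
destruct (excluded_middle_informative (P (S n))), (excluded_middle_informative (Q (S n)));
  try lia.
exfalso. apply n0, H; auto; lia.
Qed.

Lemma cnt_ext (P Q : nat -> Prop) n :
  (forall m, 1 <= m <= n -> (P m <-> Q m)) -> cnt P n = cnt Q n.
Proof. intros H. apply Nat.le_antisymm; apply cnt_mono; intros m Hm; apply H; auto. Qed.

Lemma cnt_or_le (P Q : nat -> Prop) n : cnt (fun m => P m \/ Q m) n <= cnt P n + cnt Q n.
Proof.
induction n; simpl; [lia |].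
destruct (excluded_middle_informative (P (S n) \/ Q (S n))) as [[h|h]|h],
  (excluded_middle_informative (P (S n))), (excluded_middle_informative (Q (S n)));
  try tauto; lia.
Qed.

Lemma cnt_or_disj (P Q : nat -> Prop) n : (forall m, ~ (P m /\ Q m)) ->
  cnt (fun m => P m \/ Q m) n = cnt P n + cnt Q n.
Proof.
intros D. induction n; simpl; [lia |].
specialize (D (S n)).
destruct (excluded_middle_informative (P (S n) \/ Q (S n))) as [[h|h]|h],
  (excluded_middle_informative (P (S n))), (excluded_middle_informative (Q (S n)));
  try tauto; lia.
Qed.

Lemma cnt_false (P : nat -> Prop) n : (forall m, 1 <= m <= n -> ~ P m) -> cnt P n = 0.
Proof.
intros H. induction n; simpl; [reflexivity |].
rewrite IHn by (intros; apply H; lia).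
destruct excluded_middle_informative as [h|h]; [exfalso; apply (H (S n)); auto; lia | reflexivity].
Qed.

Lemma cnt_lt M n : cnt (fun m => m < M) n <= M.
Proof.
induction n; simpl; [lia |].
destruct excluded_middle_informative; [pose proof (cnt_le_n (fun m => m < M) n) |]; lia.
Qed.

Lemma cnt_shift P n j : cnt P (n + j) = cnt P n + cnt (fun m => P (n + m)) j.
Proof.
induction j as [|j IH]; [rewrite Nat.add_0_r; simpl; lia |].
replace (n + S j) with (S (n + j)) by lia. rewrite !cnt_S, IH.
destruct (excluded_middle_informative (P (S (n + j)))), (excluded_middle_informative (P (n + S j)));
  replace (n + S j) with (S (n + j)) in * by lia; try tauto; lia.
Qed.

Lemma cnt_periodic P T j : (forall m, P (T + m) <-> P m) -> cnt P (T * j) = j * cnt P T.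
Proof.
intros HP. induction j as [|j IH]; [rewrite Nat.mul_0_r; reflexivity |].
replace (T * S j) with (T + T * j) by lia. rewrite cnt_shift.
rewrite (cnt_ext (fun m => P (T + m)) P) by (intros; apply HP). lia.
Qed.

Lemma cnt_scale P q Y : 0 < q ->
  cnt (fun m => exists t, P t /\ m = q * t) (q * Y) = cnt P Y.
Proof.
intros Hq. induction Y as [|Y IH]; [rewrite Nat.mul_0_r; reflexivity |].
replace (q * S Y) with (q * Y + q) by lia. rewrite cnt_shift, IH, (cnt_S P Y).
destruct q as [|q']; [lia |]. rewrite cnt_S.
rewrite (cnt_false _ q').
2: { intros m Hm [t [Ht E]]. assert (Y < t) by nia. nia. }
destruct (excluded_middle_informative (P (S Y)));
match goal with |- context [excluded_middle_informative ?X] =>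
  destruct (excluded_middle_informative X) as [[t [Ht E]]|h] end; try lia.
all: try (exfalso; apply h; exists (S Y); split; auto; lia).
all: assert (t = S Y) by nia; subst t; tauto.
Qed.

Lemma divide_iff_mod d n : 0 < d -> (Nat.divide d n <-> n mod d = 0).
Proof. intros. split; apply Nat.Lcm0.mod_divide. Qed.

Lemma cnt_divide q N : 0 < q -> cnt (fun m => Nat.divide q m) N = N / q.
Proof.
intros Hq. induction N as [|N IH]; [simpl; rewrite Nat.Div0.div_0_l; reflexivity |].
rewrite cnt_S, IH.
pose proof (Nat.div_mod N q ltac:(lia)). pose proof (Nat.mod_upper_bound N q ltac:(lia)).
set (a := N / q) in *. set (b := N mod q) in *.
destruct excluded_middle_informative as [h|h].
- apply divide_iff_mod in h; [|lia].
  assert (b + 1 = q).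
  { destruct (Nat.eq_dec (b + 1) q); auto. exfalso.
    assert (S N mod q = b + 1) by (symmetry; apply Nat.mod_unique with a; lia). lia. }
  apply Nat.div_unique with 0; lia.
- assert (b + 1 <> q) by (intros E; apply h; exists (a + 1); lia).
  rewrite Nat.add_0_r. apply Nat.div_unique with (b + 1); lia.
Qed.
End Counting.

Lemma periodic_density (P : nat -> Prop) T : (0 < T)%nat ->
  (forall m, P (T + m)%nat <-> P m) -> has_density P (INR (cnt P T) / INR T).
Proof.
intros HT HP eps He.
assert (HT' : 0 < INR T) by (apply lt_0_INR; lia).
destruct (eventually_div_lt (INR T) eps He) as [N0 HN0].
exists N0. intros n Hn. set (N := S n).
assert (HN : INR T / INR N < eps) by (apply HN0; unfold N; lia).
assert (HN0' : 0 < INR N) by (apply lt_0_INR; unfold N; lia).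
pose proof (Nat.div_mod N T ltac:(lia)) as Hd. pose proof (Nat.mod_upper_bound N T ltac:(lia)) as Hr.
set (q := (N / T)%nat) in *. set (r := (N mod T)%nat) in *.
(* [1, N] consists of q full periods followed by r extra integers. *)
assert (Hc : cnt P N = (q * cnt P T + cnt (fun m => P (T * q + m)%nat) r)%nat).
{ rewrite Hd at 1. rewrite cnt_shift, cnt_periodic by auto. reflexivity. }
pose proof (cnt_le_n (fun m => P (T * q + m)%nat) r) as Hcr. pose proof (cnt_le_n P T) as HcT.
unfold R_dist. fold N. rewrite Hc.
set (cr := cnt (fun m => P (T * q + m)%nat) r) in *. set (c := cnt P T) in *.
apply le_INR in Hcr, HcT.
assert (INR r < INR T) by (apply lt_INR; lia).
assert (HNe : INR N = INR T * INR q + INR r) by (rewrite <- mult_INR, <- plus_INR; f_equal; exact Hd).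
rewrite plus_INR, mult_INR.
pose proof (pos_INR q). pose proof (pos_INR cr). pose proof (pos_INR c). pose proof (pos_INR r).
replace ((INR q * INR c + INR cr) / INR N - INR c / INR T)
  with ((INR T * INR cr - INR c * INR r) / (INR T * INR N)) by (rewrite HNe; field; lra).
assert (Rabs (INR T * INR cr - INR c * INR r) <= INR T * INR T) by (apply Rabs_le; split; nra).
unfold Rdiv at 1. rewrite Rabs_mult, Rabs_inv, (Rabs_right (INR T * INR N)) by nra.
apply (Rle_lt_trans _ (INR T * INR T / (INR T * INR N))).
{ apply Rmult_le_compat_r; [apply Rlt_le, Rinv_0_lt_compat; nra | auto]. }
replace (INR T * INR T / (INR T * INR N)) with (INR T / INR N) by (field; lra). exact HN.
Qed.

Lemma upper_density_le_of_count (P : nat -> Prop) (M c : R) :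
  (forall n, INR (cnt P (S n)) <= M + c * INR (S n)) -> upper_density_le P c.
Proof.
intros Hb eta He. destruct (eventually_div_lt M eta He) as [N HN].
exists N. intros n Hn. specialize (HN (S n) ltac:(lia)). specialize (Hb n).
assert (0 < INR (S n)) by (apply lt_0_INR; lia).
apply (Rmult_le_reg_r (INR (S n))); [lra |].
replace (INR (cnt P (S n)) / INR (S n) * INR (S n)) with (INR (cnt P (S n))) by (field; lra).
assert (M < eta * INR (S n)).
{ apply (Rmult_lt_reg_r (/ INR (S n))); [apply Rinv_0_lt_compat; lra |].
  replace (eta * INR (S n) * / INR (S n)) with eta by (field; lra). exact HN. }
lra.
Qed.

Lemma upper_density_le_weaken (P : nat -> Prop) c c' :
  c <= c' -> upper_density_le P c -> upper_density_le P c'.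
Proof.
intros Hc H eta He. destruct (H eta He) as [N HN]. exists N. intros n Hn. specialize (HN n Hn). lra.
Qed.

Section Construction.
Local Open Scope nat_scope.

Fixpoint odd_sq_prod (k : nat) : nat :=
  match k with 0 => 1 | S j => odd_sq_prod j * ((2 * j + 3) * (2 * j + 3)) end.

Lemma odd_sq_prod_divisible k i : 1 <= i <= k -> Nat.divide ((2 * i + 1) * (2 * i + 1)) (odd_sq_prod k).
Proof.
induction k as [|k IH]; intros H; [lia |].
simpl odd_sq_prod. destruct (Nat.eq_dec i (S k)) as [->|Hne].
- apply Nat.divide_mul_r. replace (2 * S k + 1) with (2 * k + 3) by lia. apply Nat.divide_refl.
- apply Nat.divide_mul_l, IH. lia.
Qed.

Lemma odd_sq_prod_mod4 k : odd_sq_prod k mod 4 = 1.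
Proof.
induction k as [|k IH]; [reflexivity |]. cbn [odd_sq_prod].
replace (odd_sq_prod k * ((2 * k + 3) * (2 * k + 3)))
  with (odd_sq_prod k + 4 * (odd_sq_prod k * (k * k + 3 * k + 2))) by ring.
generalize (odd_sq_prod k * (k * k + 3 * k + 2)). intros. lia.
Qed.

Lemma odd_sq_prod_pos k : 0 < odd_sq_prod k.
Proof. pose proof (odd_sq_prod_mod4 k). destruct (odd_sq_prod k); [discriminate | lia]. Qed.

Definition has_small_odd_sq (k n : nat) : Prop :=
  exists i, 1 <= i <= k /\ Nat.divide ((2 * i + 1) * (2 * i + 1)) n.

Definition Aset (k n : nat) : Prop :=
  (n mod 4 = 2 /\ has_small_odd_sq k n) \/ Nat.divide (odd_sq_prod k) n.

Definition Cset (k n : nat) : Prop := n mod 4 = 2 /\ ~ has_small_odd_sq k n.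

Lemma not_squarefree_of_sq d m : 2 <= d -> Nat.divide (d * d) m -> ~ squarefree m.
Proof. intros H1 H2 [_ H]. exact (H d H1 H2). Qed.

(* A_k + A_k contains no squarefree number: two elements = 2 mod 4 sum to a
   multiple of 4, and otherwise some (2i+1)^2 divides both summands. *)
Lemma Aset_sum_not_squarefree k a b : 1 <= k -> Aset k a -> Aset k b -> ~ squarefree (a + b).
Proof.
intros Hk [[Ha [i [Hi Hdi]]]|Ha] [[Hb [j [Hj Hdj]]]|Hb].
- apply (not_squarefree_of_sq 2); [lia |]. apply divide_iff_mod; lia.
- apply (not_squarefree_of_sq (2 * i + 1)); [lia |]. apply Nat.divide_add_r; auto.
  eapply Nat.divide_trans; [apply odd_sq_prod_divisible; eauto | exact Hb].
- apply (not_squarefree_of_sq (2 * j + 1)); [lia |]. apply Nat.divide_add_r; auto.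
  eapply Nat.divide_trans; [apply odd_sq_prod_divisible; eauto | exact Ha].
- apply (not_squarefree_of_sq 3); [lia |].
  apply Nat.divide_add_r; eapply Nat.divide_trans;
    try apply (odd_sq_prod_divisible k 1); auto; lia.
Qed.

Lemma residue_witness r : r < 25 ->
  exists a, a < 918 /\ a mod 4 = 2 /\ a mod 9 = 0 /\ a mod 25 = r.
Proof.
intros Hr. set (Q := 16 * (r + 7) / 25). set (t := (16 * (r + 7)) mod 25).
assert (Ht : 16 * (r + 7) = 25 * Q + t) by apply Nat.div_mod_eq.
assert (t < 25) by (apply Nat.mod_upper_bound; lia).
exists (18 + 36 * t). split; [lia |]. split; [| split];
  symmetry; [apply Nat.mod_unique with (4 + 9 * t) | apply Nat.mod_unique with (2 + 4 * t)
            | apply Nat.mod_unique with (23 * r + 162 - 36 * Q)]; lia.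
Qed.

(* Every multiple of 4 that is at least 918 is a + b with a = 2 mod 4, 9 | a
   and b = 2 mod 4, 25 | b. *)
Lemma sumset2_mult_4 k x : 2 <= k -> x mod 4 = 0 -> 918 <= x -> sumset2 (Aset k) x.
Proof.
intros Hk H4 Hx.
destruct (residue_witness (x mod 25)) as [a [Ha1 [Ha2 [Ha3 Ha4]]]]; [apply Nat.mod_upper_bound; lia |].
exists a, (x - a). split; [| split]; [| | lia].
- left. split; auto. exists 1. split; [lia |]. apply divide_iff_mod; lia.
- left. split; [lia |]. exists 2. split; [lia |]. apply divide_iff_mod; lia.
Qed.

Lemma multiple_with_residue k m :
  exists c, Nat.divide (odd_sq_prod k) c /\ c <= 3 * odd_sq_prod k /\ c mod 4 = m mod 4.
Proof.
exists (odd_sq_prod k * (m mod 4)). split; [exists (m mod 4); ring |].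
pose proof (odd_sq_prod_mod4 k). pose proof (Nat.mod_upper_bound m 4 ltac:(lia)). split; [nia |].
rewrite Nat.Div0.mul_mod, H. lia.
Qed.

(* A large m divisible by some (2i+1)^2, i <= k, is c + (m - c) with c a
   multiple of L_k and m - c = 2 mod 4. *)
Lemma sumset2_odd_sq k m i : 1 <= i <= k -> Nat.divide ((2 * i + 1) * (2 * i + 1)) m ->
  4 * odd_sq_prod k <= m -> sumset2 (Aset k) m.
Proof.
intros Hi Hd Hm.
destruct (multiple_with_residue k (m + 2)) as [c [Hc [Hc3 Hc4]]].
exists c, (m - c). split; [right; exact Hc | split; [| lia]].
left. split; [lia |]. exists i. split; auto. apply Nat.divide_sub_r; auto.
eapply Nat.divide_trans; [apply odd_sq_prod_divisible; eauto | exact Hc].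
Qed.

Lemma Aset_sumset3 k m : 2 <= k -> 4 * odd_sq_prod k + 918 <= m -> sumset3 (Aset k) m.
Proof.
intros Hk Hm.
destruct (multiple_with_residue k m) as [c [Hc [Hc3 Hc4]]].
destruct (sumset2_mult_4 k (m - c) Hk ltac:(lia) ltac:(lia)) as [a [b [Ha [Hb E]]]].
exists a, b, c. repeat split; auto; [right; auto | lia].
Qed.

Lemma Aset_periodic k m : Aset k (4 * odd_sq_prod k + m) <-> Aset k m.
Proof.
assert (Hm : (4 * odd_sq_prod k + m) mod 4 = m mod 4) by (generalize (odd_sq_prod k); intros; lia).
assert (HD : forall q, Nat.divide q (odd_sq_prod k) ->
          (Nat.divide q (4 * odd_sq_prod k + m) <-> Nat.divide q m)).
{ intros q Hq. split; intros H.
  - apply (Nat.divide_add_cancel_r _ (4 * odd_sq_prod k)); auto. apply Nat.divide_mul_r; auto.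
  - apply Nat.divide_add_r; auto. apply Nat.divide_mul_r; auto. }
unfold Aset, has_small_odd_sq. rewrite Hm, (HD (odd_sq_prod k)) by apply Nat.divide_refl.
split; intros [[H1 [i [Hi Hd]]]|H]; auto; left; split; auto; exists i; split; auto;
  apply (HD _ (odd_sq_prod_divisible k i Hi)); auto.
Qed.
End Construction.

Section Exceptional.
Local Open Scope nat_scope.

Definition has_sq_divisor_in (K D m : nat) : Prop :=
  exists d, K < d <= D /\ Nat.divide (d * d) m.

(* Once m >= 4 L_k + 918, a non-squarefree m outside A_k + A_k can only be
   divisible by squares of integers d > 2k + 1: even d are handled by
   [sumset2_mult_4], odd d <= 2k + 1 by [sumset2_odd_sq]. *)
Lemma exceptional_sq_divisor k m : 2 <= k -> 4 * odd_sq_prod k + 918 <= m ->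
  ~ squarefree m -> ~ sumset2 (Aset k) m -> has_sq_divisor_in (2 * k + 1) m m.
Proof.
intros Hk Hm Hs Hn.
destruct (classic (exists d, 2 <= d /\ Nat.divide (d * d) m)) as [[d [Hd Hdd]]|Hno].
2: { exfalso. apply Hs. split; [lia |]. intros d Hd Hdd. apply Hno. eauto. }
exists d. split; [split | exact Hdd].
- destruct (Nat.Even_or_Odd d) as [[e ->]|[i ->]].
  + exfalso. apply Hn, sumset2_mult_4; try lia. apply divide_iff_mod; [lia |].
    eapply Nat.divide_trans; [| exact Hdd]. exists (e * e). ring.
  + destruct (le_lt_dec i k); [| lia].
    exfalso. apply Hn. apply (sumset2_odd_sq k m i); auto; lia.
- apply Nat.divide_pos_le in Hdd; nia.
Qed.

Fixpoint sum_div_sq (K N D : nat) : nat :=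
  match D with
  | 0 => 0
  | S D' => sum_div_sq K N D' + (if K <? S D' then N / (S D' * S D') else 0)
  end.

(* Union bound over the possible square divisors. *)
Lemma cnt_has_sq_divisor_in K N D : cnt (has_sq_divisor_in K D) N <= sum_div_sq K N D.
Proof.
induction D as [|D IH].
- simpl. rewrite cnt_false; [lia |]. intros m _ [d Hd]. lia.
- cbn [sum_div_sq].
  assert (cnt (has_sq_divisor_in K (S D)) N
          <= cnt (fun m => has_sq_divisor_in K D m \/ (K < S D /\ Nat.divide (S D * S D) m)) N).
  { apply cnt_mono. intros m _ [d [Hd1 Hd2]]. destruct (Nat.eq_dec d (S D)) as [->|Hne].
    - right. split; auto. lia.
    - left. exists d. split; auto. lia. }
  pose proof (cnt_or_le (has_sq_divisor_in K D) (fun m => K < S D /\ Nat.divide (S D * S D) m) N).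
  destruct (Nat.ltb_spec K (S D)).
  + assert (cnt (fun m => K < S D /\ Nat.divide (S D * S D) m) N = N / (S D * S D)).
    { rewrite <- cnt_divide by lia. apply cnt_ext. intros. tauto. }
    lia.
  + rewrite (cnt_false (fun m => K < S D /\ _)) in * by (intros; lia). lia.
Qed.
End Exceptional.

Lemma INR_div_le N q : (0 < q)%nat -> INR (N / q) <= INR N / INR q.
Proof.
intros Hq. pose proof (Nat.Div0.mul_div_le N q) as H.
apply le_INR in H. rewrite mult_INR in H.
assert (0 < INR q) by (apply lt_0_INR; lia).
apply (Rmult_le_reg_l (INR q)); auto. replace (INR q * (INR N / INR q)) with (INR N) by (field; lra). lra.
Qed.

(* Telescoping: sum_{K < d <= D} N/d^2 <= N (1/K - 1/max(D,K)),
   since 1/d^2 <= 1/(d-1) - 1/d. *)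
Lemma sum_div_sq_bound K N D : (1 <= K)%nat ->
  INR (sum_div_sq K N D) <= INR N * (1 / INR K - 1 / INR (Nat.max D K)).
Proof.
intros HK. assert (1 <= INR K) by (apply (le_INR 1); lia).
induction D as [|D IH].
- simpl. lra.
- cbn [sum_div_sq]. rewrite plus_INR. destruct (Nat.ltb_spec K (S D)).
  + rewrite (Nat.max_l (S D) K) by lia. rewrite (Nat.max_l D K) in IH by lia.
    assert (1 <= INR D) by (apply (le_INR 1); lia).
    pose proof (INR_div_le N (S D * S D)%nat ltac:(lia)) as Hdiv. rewrite mult_INR, S_INR in Hdiv.
    rewrite S_INR. pose proof (pos_INR N).
    assert (INR N / ((INR D + 1) * (INR D + 1)) <= INR N * (1 / INR D - 1 / (INR D + 1))).
    { replace (INR N * (1 / INR D - 1 / (INR D + 1))) with (INR N / (INR D * (INR D + 1)))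
        by (field; lra).
      unfold Rdiv. apply Rmult_le_compat_l; auto. apply Rinv_le_contravar; nra. }
    lra.
  + rewrite (Nat.max_r (S D) K) by lia. rewrite (Nat.max_r D K) in IH by lia. simpl. lra.
Qed.

Definition exceptional (k m : nat) : Prop :=
  (0 < m)%nat /\ ~ squarefree m /\ ~ sumset2 (Aset k) m.

Lemma exceptional_count k n : (2 <= k)%nat ->
  INR (cnt (exceptional k) (S n))
  <= INR (4 * odd_sq_prod k + 918) + 1 / INR (2 * k + 1) * INR (S n).
Proof.
intros Hk. set (M := (4 * odd_sq_prod k + 918)%nat). set (N := S n).
assert (Hc : (cnt (exceptional k) N <= M + sum_div_sq (2 * k + 1) N N)%nat).
{ eapply Nat.le_trans.
  - apply (cnt_mono _ (fun m => (m < M)%nat \/ has_sq_divisor_in (2 * k + 1) N m)).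
    intros m Hm [_ [H2 H3]]. destruct (Nat.lt_ge_cases m M); [left; auto | right].
    destruct (exceptional_sq_divisor k m Hk H H2 H3) as [d [Hd1 Hd2]].
    exists d. split; [lia | exact Hd2].
  - pose proof (cnt_or_le (fun m => (m < M)%nat) (has_sq_divisor_in (2 * k + 1) N) N).
    pose proof (cnt_lt M N). pose proof (cnt_has_sq_divisor_in (2 * k + 1) N N). lia. }
apply le_INR in Hc. rewrite plus_INR in Hc.
pose proof (sum_div_sq_bound (2 * k + 1) N N ltac:(lia)).
assert (0 < INR (Nat.max N (2 * k + 1))) by (apply lt_0_INR; lia).
assert (0 <= 1 / INR (Nat.max N (2 * k + 1))) by (apply Rlt_le, Rdiv_lt_0_compat; lra).
pose proof (pos_INR N). nra.
Qed.

Lemma exceptional_upper_density k : (2 <= k)%nat ->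
  upper_density_le (exceptional k) (1 / INR (2 * k + 1)).
Proof.
intros Hk. apply (upper_density_le_of_count _ (INR (4 * odd_sq_prod k + 918))).
intros n. apply exceptional_count, Hk.
Qed.

Section Density.
Local Open Scope nat_scope.

Lemma coprime_sq_divides a b t t' : a * a * t = b * b * t' -> Nat.gcd b a = 1 ->
  Nat.divide (b * b) t.
Proof.
intros E G. destruct (Nat.eq_dec b 0) as [->|Hb].
- rewrite Nat.gcd_0_l in G. subst. simpl in E. rewrite Nat.add_0_r in E. subst.
  apply Nat.divide_0_r.
- assert (Nat.divide b (a * (a * t))) by (exists (b * t'); lia).
  apply Nat.gauss in H; auto. apply Nat.gauss in H; auto. destruct H as [t1 ->].
  assert (E2 : b * (a * a * t1) = b * (b * t')) by lia.
  apply Nat.mul_cancel_l in E2; auto.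
  assert (Nat.divide b (a * (a * t1))) by (exists t'; lia).
  apply Nat.gauss in H; auto. apply Nat.gauss in H; auto. destruct H as [t2 ->].
  exists t2. ring.
Qed.

Lemma Cset_sq_divisor_trivial k t y j : Cset k t -> Nat.divide (y * y) t -> j <= k ->
  Nat.divide y (2 * j + 1) -> y = 1.
Proof.
intros [_ HC] Hd Hj [g Hg].
destruct (Nat.Even_or_Odd y) as [[e ->]|[[|i] ->]]; [lia | lia |].
exfalso. apply HC. exists (S i). split; [| exact Hd].
assert (g <> 0) by (intros ->; lia). nia.
Qed.

Definition scaled_C (k i m : nat) : Prop :=
  exists t, Cset k t /\ m = (2 * i + 1) * (2 * i + 1) * t.

(* The dilates (2i+1)^2 C_k, 0 <= i <= k, are pairwise disjoint: cancelling
   the gcd g of 2i+1 and 2j+1 leaves coprime squares, which must both be 1. *)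
Lemma scaled_C_disjoint k i j m : i <= k -> j <= k ->
  scaled_C k i m -> scaled_C k j m -> i = j.
Proof.
intros Hi Hj [t [Ct ->]] [t' [Ct' E]].
set (n := 2 * i + 1) in *. set (n' := 2 * j + 1) in *. set (g := Nat.gcd n n').
destruct (Nat.gcd_divide_l n n') as [x Hx]. destruct (Nat.gcd_divide_r n n') as [y Hy].
fold g in Hx, Hy.
assert (Hg : g <> 0) by (intros H0; rewrite H0 in Hx; lia).
assert (Gxy : Nat.gcd x y = 1).
{ pose proof (Nat.gcd_mul_mono_r x y g) as H. rewrite <- Hx, <- Hy in H. fold g in H.
  destruct (Nat.gcd x y) as [|[|z]]; nia. }
assert (E2 : x * x * t = y * y * t').
{ apply (Nat.mul_cancel_l _ _ (g * g)); [nia |]. rewrite Hx, Hy in E. lia. }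
assert (y = 1).
{ apply (Cset_sq_divisor_trivial k t y j); auto.
  - apply (coprime_sq_divides x y t t'); auto. rewrite Nat.gcd_comm; auto.
  - exists g. unfold n' in Hy. lia. }
assert (x = 1).
{ apply (Cset_sq_divisor_trivial k t' x i); auto.
  - apply (coprime_sq_divides y x t' t); auto.
  - exists g. unfold n in Hx. lia. }
subst. unfold n, n' in *. lia.
Qed.

Fixpoint sum_cnt_scaled_C (k X j : nat) : nat :=
  match j with
  | 0 => cnt (scaled_C k 0) X
  | S j' => sum_cnt_scaled_C k X j' + cnt (scaled_C k (S j')) X
  end.

(* By disjointness, the sum counts the union of the dilates. *)
Lemma cnt_union_scaled_C k X j : j <= k ->
  cnt (fun m => exists i, i <= j /\ scaled_C k i m) X = sum_cnt_scaled_C k X j.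
Proof.
induction j as [|j IH]; intros Hj.
- apply cnt_ext. intros m _. split; [intros [i [Hi HQ]]; replace i with 0 in HQ by lia; auto |].
  intros HQ. exists 0. auto.
- cbn [sum_cnt_scaled_C]. rewrite <- IH by lia. rewrite <- cnt_or_disj.
  + apply cnt_ext. intros m _. split.
    * intros [i [Hi HQ]]. destruct (Nat.eq_dec i (S j)) as [->|Hne]; [right; auto |].
      left. exists i. split; auto. lia.
    * intros [[i [Hi HQ]]|HQ]; [exists i | exists (S j)]; auto.
  + intros m [[i [Hi HQ]] HQ']. assert (i = S j) by (apply (scaled_C_disjoint k i (S j) m); auto; lia). lia.
Qed.

Lemma cnt_mod4_eq2 Y : cnt (fun m => m mod 4 = 2) (4 * Y) = Y.
Proof.
rewrite cnt_periodic by (intros m; lia).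
assert (cnt (fun m => m mod 4 = 2) 4 = 1).
{ cbn [cnt]. repeat destruct excluded_middle_informative; simpl in *; lia. }
lia.
Qed.

(* Odd squares are 1 mod 4, so the dilates stay in the class 2 mod 4. *)
Lemma scaled_C_mod4 k i m : scaled_C k i m -> m mod 4 = 2.
Proof.
intros [t [[Ht _] ->]].
replace ((2 * i + 1) * (2 * i + 1) * t) with (t + 4 * ((i * i + i) * t)) by ring.
generalize ((i * i + i) * t). intros. lia.
Qed.

Lemma Cset_periodic k m : Cset k (4 * odd_sq_prod k + m) <-> Cset k m.
Proof.
unfold Cset, has_small_odd_sq.
replace ((4 * odd_sq_prod k + m) mod 4) with (m mod 4) by (generalize (odd_sq_prod k); intros; lia).
assert (HD : forall i, 1 <= i <= k -> (Nat.divide ((2 * i + 1) * (2 * i + 1)) (4 * odd_sq_prod k + m)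
                         <-> Nat.divide ((2 * i + 1) * (2 * i + 1)) m)).
{ intros i Hi. pose proof (Nat.divide_mul_r _ 4 _ (odd_sq_prod_divisible k i Hi)). split; intros H'.
  - apply (Nat.divide_add_cancel_r _ (4 * odd_sq_prod k)); auto.
  - apply Nat.divide_add_r; auto. }
split; intros [H1 H2]; split; auto; intros [i [Hi Hd]]; apply H2; exists i; split; auto;
  apply HD; auto.
Qed.

Lemma cnt_scaled_C k i : i <= k ->
  cnt (scaled_C k i) (4 * odd_sq_prod k * odd_sq_prod k)
  = (odd_sq_prod k / ((2 * i + 1) * (2 * i + 1))) * cnt (Cset k) (4 * odd_sq_prod k).
Proof.
intros Hi. set (q := (2 * i + 1) * (2 * i + 1)).
assert (Hq : Nat.divide q (odd_sq_prod k)).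
{ destruct i; [exists (odd_sq_prod k); unfold q; ring | apply odd_sq_prod_divisible; lia]. }
destruct Hq as [w Hw].
replace (odd_sq_prod k / q) with w by (rewrite Hw; symmetry; apply Nat.div_mul; unfold q; lia).
replace (4 * odd_sq_prod k * odd_sq_prod k) with (q * (4 * odd_sq_prod k * w))
  by (rewrite Hw at 2; ring).
unfold scaled_C. fold q. rewrite cnt_scale by (unfold q; lia).
rewrite cnt_periodic by apply Cset_periodic. ring.
Qed.

(* The dilates all lie in the class 2 mod 4, which has L_k^2 elements up to 4 L_k^2. *)
Lemma sum_cnt_scaled_C_le k :
  sum_cnt_scaled_C k (4 * odd_sq_prod k * odd_sq_prod k) k <= odd_sq_prod k * odd_sq_prod k.
Proof.
rewrite <- cnt_union_scaled_C by lia.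
replace (4 * odd_sq_prod k * odd_sq_prod k) with (4 * (odd_sq_prod k * odd_sq_prod k)) by ring.
rewrite <- (cnt_mod4_eq2 (odd_sq_prod k * odd_sq_prod k)) at 2. apply cnt_mono.
intros m _ [i [_ HQ]]. eapply scaled_C_mod4; eauto.
Qed.

(* In one period, the class 2 mod 4 is split between A_k and C_k. *)
Lemma cnt_Aset_Cset k :
  odd_sq_prod k <= cnt (Aset k) (4 * odd_sq_prod k) + cnt (Cset k) (4 * odd_sq_prod k).
Proof.
rewrite <- (cnt_mod4_eq2 (odd_sq_prod k)) at 1.
eapply Nat.le_trans; [apply (cnt_mono _ (fun m => Aset k m \/ Cset k m)) | apply cnt_or_le].
intros m _ H. destruct (classic (has_small_odd_sq k m)); [left; left | right]; split; auto.
Qed.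
End Density.

Lemma INR_div_exact a q : (0 < q)%nat -> Nat.divide q a -> INR (a / q) = INR a / INR q.
Proof.
intros Hq [w ->]. rewrite Nat.div_mul by lia. rewrite mult_INR. field. apply not_0_INR. lia.
Qed.

Lemma sum_cnt_scaled_C_INR k j : (j <= k)%nat ->
  INR (sum_cnt_scaled_C k (4 * odd_sq_prod k * odd_sq_prod k) j)
  = INR (cnt (Cset k) (4 * odd_sq_prod k)) * INR (odd_sq_prod k) * sum_inv_odd_sq (S j).
Proof.
induction j as [|j IH]; intros Hj.
- cbn [sum_cnt_scaled_C]. rewrite cnt_scaled_C by lia. simpl sum_inv_odd_sq.
  rewrite mult_INR, Nat.div_1_r. simpl. field.
- cbn [sum_cnt_scaled_C]. rewrite plus_INR, IH, cnt_scaled_C, mult_INR by lia.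
  rewrite INR_div_exact by (try lia; apply odd_sq_prod_divisible; lia).
  change (sum_inv_odd_sq (S (S j))) with (sum_inv_odd_sq (S j) + 1 / INR (2 * S j + 1) ^ 2).
  rewrite mult_INR. field. apply not_0_INR. lia.
Qed.

Lemma Cset_count_bound k :
  INR (cnt (Cset k) (4 * odd_sq_prod k)) * sum_inv_odd_sq (S k) <= INR (odd_sq_prod k).
Proof.
pose proof (sum_cnt_scaled_C_le k) as H. apply le_INR in H.
rewrite sum_cnt_scaled_C_INR, mult_INR in H by lia.
assert (0 < INR (odd_sq_prod k)) by (apply lt_0_INR, odd_sq_prod_pos).
apply (Rmult_le_reg_r (INR (odd_sq_prod k))); auto. lra.
Qed.

Lemma sum_inv_odd_sq_ge_1 k : 1 <= sum_inv_odd_sq (S k).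
Proof.
induction k as [|k IH]; [simpl; lra |].
change (sum_inv_odd_sq (S (S k))) with (sum_inv_odd_sq (S k) + 1 / INR (2 * S k + 1) ^ 2).
assert (0 < INR (2 * S k + 1)) by (apply lt_0_INR; lia).
assert (0 <= 1 / INR (2 * S k + 1) ^ 2) by (apply Rlt_le, Rdiv_lt_0_compat; [lra | apply pow_lt; lra]).
lra.
Qed.

Lemma Aset_density_lower k :
  1 / 4 - 1 / (4 * sum_inv_odd_sq (S k))
  <= INR (cnt (Aset k) (4 * odd_sq_prod k)) / INR (4 * odd_sq_prod k).
Proof.
pose proof (cnt_Aset_Cset k) as Hsplit. apply le_INR in Hsplit. rewrite plus_INR in Hsplit.
pose proof (Cset_count_bound k). pose proof (sum_inv_odd_sq_ge_1 k).
assert (0 < INR (odd_sq_prod k)) by (apply lt_0_INR, odd_sq_prod_pos).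
rewrite mult_INR. simpl (INR 4).
set (S := sum_inv_odd_sq (S k)) in *. set (L := INR (odd_sq_prod k)) in *.
set (a := INR (cnt (Aset k) (4 * odd_sq_prod k))) in *.
set (c := INR (cnt (Cset k) (4 * odd_sq_prod k))) in *.
assert (c <= L / S) by (apply (Rmult_le_reg_r S); [lra |]; unfold Rdiv; rewrite Rmult_assoc, Rinv_l; lra).
replace (1 / 4 - 1 / (4 * S)) with ((L - L / S) / ((1 + 1 + 1 + 1) * L)) by (field; lra).
apply Rmult_le_compat_r; [apply Rlt_le, Rinv_0_lt_compat; lra | lra].
Qed.

Lemma delta0_approx (S eta eps : R) : 0 < eta -> eta <= eps -> eta <= 1/10 ->
  PI ^ 2 / 8 - eta <= S -> 1 / 4 - 1 / (4 * S) > delta0 - eps.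
Proof.
intros He1 He2 He3 HS. unfold delta0. pose proof PI2_3_2 as Hpi.
set (p := PI ^ 2 / 8) in *.
assert (Hp : 9/8 < p) by (unfold p; nra).
replace (2 / PI ^ 2) with (1 / (4 * p)) by (unfold p; field; pose proof PI_RGT_0; lra).
assert (1 / S - 1 / p <= eta).
{ replace (1 / S - 1 / p) with ((p - S) / (p * S)) by (field; lra).
  apply (Rmult_le_reg_r (p * S)); [nra |].
  replace ((p - S) / (p * S) * (p * S)) with (p - S) by (field; lra).
  assert (0 <= eta * (p * S - 1)) by (apply Rmult_le_pos; nra). nra. }
replace (1 / (4 * S)) with ((1 / S) / 4) by (field; lra).
replace (1 / (4 * p)) with ((1 / p) / 4) by (field; lra). lra.
Qed.

Theorem theorem1 :
  forall eps : R, 0 < eps ->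
  exists A : nat -> Prop,
    (exists d : R, has_density A d /\ d > delta0 - eps) /\
    (forall m : nat, sumset2 A m -> ~ squarefree m) /\
    (exists N : nat, forall m : nat, (N <= m)%nat -> sumset3 A m) /\
    upper_density_le
      (fun m => (0 < m)%nat /\ ~ squarefree m /\ ~ sumset2 A m) eps.
Proof.
intros eps Heps.
set (eta := Rmin eps (1/10)).
assert (Heta : 0 < eta) by (apply Rmin_pos; lra).
(* Choose k so that the odd Basel sum is eta-close to pi^2/8 and 1/(2k+1) < eps. *)
destruct (sum_inv_odd_sq_lower eta Heta) as [M0 HM0].
destruct (eventually_div_lt 1 eps Heps) as [K1 HK1].
set (k := Nat.max (Nat.max M0 2) K1).
set (L := odd_sq_prod k).
exists (Aset k). split; [| split; [| split]].
- exists (INR (cnt (Aset k) (4 * L)) / INR (4 * L)). split.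
  + apply periodic_density; [pose proof (odd_sq_prod_pos k); lia | apply Aset_periodic].
  + eapply Rlt_le_trans; [| apply Aset_density_lower].
    apply (delta0_approx _ eta); [exact Heta | apply Rmin_l | apply Rmin_r | apply HM0; lia].
- intros m [a [b [Ha [Hb ->]]]]. apply (Aset_sum_not_squarefree k); auto. lia.
- exists (4 * L + 918)%nat. intros m Hm. apply Aset_sumset3; [lia | exact Hm].
- apply (upper_density_le_weaken _ (1 / INR (2 * k + 1))).
  + apply Rlt_le, HK1. lia.
  + apply exceptional_upper_density. lia.
Qed.
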